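(* Let $(\mathcal A,n)$ be a dynamic network congestion game. An infinite path $\rho$ from $c_{\mathsf{src}}$ in the configuration graph is the outcome of a Nash equilibrium if, and only if, for every player $i\in[n]$, every index $1\le l<|\rho|$, and every configuration $c\in\mathrm{dev}_i(\rho(l),\rho(l+1))$, \[\mathrm{cost}_i(\rho_{\ge l})\le \mathrm{val}_{i,c}+\mathrm{cost}_i(\rho(l),c).\]
   Context: An arena is $\mathcal A=(V,E,\mathsf{src},\mathsf{tgt})$ with $V$ finite and $E$ a partial function from $V\times V$ to non-decreasing piecewise-affine functions $\mathbb N\to\mathbb N$ (edge $e$ has cost function $\ell_e$); $\mathsf{tgt}$ has only a self-loop of constant cost $0$ and is reachable from every state. In the dynamic NCG $(\mathcal A,n)$ with players $[n]=\{1,\dots,n\}$, configurations are maps $c:[n]\to V$; $c_{\mathsf{src}}$ maps everyone to $\mathsf{src}$. From $c$, a move vector $(e_i)_i$ with $e_i$ an edge leaving $c(i)$ leads to $c'$ with $c'(i)$ the target of $e_i$; player $i$ pays $w(i)=\ell_{e_i}(u_i)$, $u_i$ being the number of $j$ with $e_j=e_i$. This is a transition $c\Rightarrow c'$ with weight vector $w$; write $\mathrm{cost}_i(c,c')=w(i)$. A path is a sequence of consecutive transitions; $\rho(l)$ is its $l$-th configuration, $\rho_{\ge l}$ its suffix from the $l$-th configuration, and $\mathrm{cost}_i$ of a path is player $i$'s total payment along it ($+\infty$ for an infinite path along which player $i$ never reaches $\mathsf{tgt}$). Strategies map finite histories to edges leaving the player's current state; a profile has a unique outcome; $\mathrm{cost}_i(\sigma)$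 is the cost of the outcome; a Nash equilibrium is a profile where no player can lower their cost by a unilateral change of strategy. Define $\mathrm{dev}_i(c,c')=\{c''\mid c\Rightarrow c'' \text{ and } c''(j)=c'(j)\ \forall j\neq i\}$. The value of configuration $c$ for player $i$ is $\mathrm{val}_{i,c}=\sup_{\sigma_{-i}}\inf_{\sigma_i}\mathrm{cost}_i((\sigma_{-i},\sigma_i),c)$, where the game is started from configuration $c$, $\sigma_{-i}$ ranges over strategies of the other players and $\sigma_i$ over strategies of player $i$. *)

From HB Require Import structures.
From mathcomp Require Import all_boot all_order all_algebra.
From mathcomp Require Import all_classical all_reals all_analysis.
Set Implicit Arguments. Unset Strict Implicit. Unset Printing Implicit Defensive.
Import Order.TTheory GRing.Theory Num.Theory.
Local Open Scope classical_set_scope.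
Local Open Scope ring_scope.

Definition nondecreasing_nat (f : nat -> nat) : Prop :=
  forall x y : nat, (x <= y)%N -> (f x <= f y)%N.

Definition affine_on (f : nat -> nat) (lo : nat) (hi : option nat) : Prop :=
  exists a b : int, forall x : nat, (lo <= x)%N ->
    (if hi is Some h then (x < h)%N else true) ->
    ((f x)%:Z = a * x%:Z + b)%R.

Definition piecewise_affine (f : nat -> nat) : Prop :=
  exists s : seq nat,
    [/\ sorted ltn (0%N :: s),
        (forall k, (k < size s)%N ->
           affine_on f (nth 0%N (0%N :: s) k) (Some (nth 0%N (0%N :: s) k.+1)))
      & affine_on f (last 0%N s) None].

(* E : partial function V x V -> cost functions; an edge is a pair (u,v)
   with E u v = Some l_(u,v). *)
Record arena (V : finType) := Arena {
  edge : V -> V -> option (nat -> nat);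
  src : V;
  tgt : V }.

Definition edge_rel (V : finType) (A : arena V) : rel V :=
  fun u v => isSome (edge A u v).

Definition arena_wf (V : finType) (A : arena V) : Prop :=
  [/\ (forall u v f, edge A u v = Some f -> nondecreasing_nat f /\ piecewise_affine f),
      (forall v f, edge A (tgt A) v = Some f -> v = tgt A),
      (exists2 f, edge A (tgt A) (tgt A) = Some f & forall x, f x = 0%N)
    & (forall v, connect (edge_rel A) v (tgt A))].

Definition config (V : finType) (n : nat) := {ffun 'I_n -> V}.

Definition csrc (V : finType) (A : arena V) (n : nat) : config V n :=
  [ffun _ => src A].

Definition trans (V : finType) (A : arena V) (n : nat) (c c' : config V n) : Prop :=
  forall i : 'I_n, edge A (c i) (c' i) <> None.

Definition load (V : finType) (n : nat) (c c' : config V n) (i : 'I_n) : nat :=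
  #|[set j : 'I_n | (c j == c i) && (c' j == c' i)]|.

Definition step_cost (V : finType) (A : arena V) (n : nat)
    (c c' : config V n) (i : 'I_n) : nat :=
  match edge A (c i) (c' i) with
  | Some f => f (load c c' i)
  | None => 0%N
  end.

Definition dev (V : finType) (A : arena V) (n : nat) (i : 'I_n)
    (c c' : config V n) : set (config V n) :=
  [set c'' | trans A c c'' /\ (forall j : 'I_n, j != i -> c'' j = c' j)].

Definition is_path (V : finType) (A : arena V) (n : nat) (rho : nat -> config V n) : Prop :=
  forall k, trans A (rho k) (rho k.+1).

Definition path_suffix (T : Type) (rho : nat -> T) (l : nat) : nat -> T :=
  fun k => rho (l + k)%N.

Definition path_cost (R : realType) (V : finType) (A : arena V) (n : nat)
    (i : 'I_n) (rho : nat -> config V n) : \bar R :=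
  if `[< exists k, rho k i = tgt A >] then
    (\sum_(0 <= k <oo) ((step_cost A (rho k) (rho k.+1) i)%:R)%:E)%E
  else +oo%E.

(* a history is a nonempty finite sequence of configurations, represented as
   (first configuration c0, remaining configurations h); the current
   configuration is last c0 h.  A strategy chooses the target of an edge. *)
Definition strat (V : finType) (n : nat) := config V n -> seq (config V n) -> V.

Definition valid_strat (V : finType) (A : arena V) (n : nat) (i : 'I_n)
    (s : strat V n) : Prop :=
  forall (c0 : config V n) (h : seq (config V n)), edge_rel A ((last c0 h) i) (s c0 h).

Definition profile (V : finType) (n : nat) := 'I_n -> strat V n.

Definition valid_profile (V : finType) (A : arena V) (n : nat) (sg : profile V n) : Prop :=
  forall i, valid_strat A i (sg i).

Fixpoint hist (V : finType) (n : nat) (sg : profile V n) (c0 : config V n) (k : nat)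
    : seq (config V n) :=
  match k with
  | 0 => [::]
  | k'.+1 => let h := hist sg c0 k' in rcons h [ffun i => sg i c0 h]
  end.

Definition outcome (V : finType) (n : nat) (sg : profile V n) (c0 : config V n)
    : nat -> config V n :=
  fun k => last c0 (hist sg c0 k).

Definition profile_cost (R : realType) (V : finType) (A : arena V) (n : nat)
    (sg : profile V n) (c0 : config V n) (i : 'I_n) : \bar R :=
  path_cost R A i (outcome sg c0).

Definition update (V : finType) (n : nat) (sg : profile V n) (i : 'I_n)
    (s : strat V n) : profile V n :=
  fun j => if j == i then s else sg j.

Definition is_NE (R : realType) (V : finType) (A : arena V) (n : nat)
    (sg : profile V n) : Prop :=
  valid_profile A sg /\
  forall (i : 'I_n) (s : strat V n), valid_strat A i s ->
    (profile_cost R A sg (csrc A n) i <= profile_cost R A (update sg i s) (csrc A n) i)%E.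

(* val_{i,c} = sup_{sigma_-i} inf_{sigma_i} cost_i((sigma_-i, sigma_i), c);
   sigma_-i is represented by a full profile whose i-th component is overwritten *)
Definition game_val (R : realType) (V : finType) (A : arena V) (n : nat)
    (i : 'I_n) (c : config V n) : \bar R :=
  ereal_sup [set x | exists2 sg : profile V n, valid_profile A sg &
     x = ereal_inf [set y | exists2 s : strat V n, valid_strat A i s &
                                y = profile_cost R A (update sg i s) c i]].

Arguments path_cost R {V} A {n} i rho.
Arguments profile_cost R {V} A {n} sg c0 i.
Arguments is_NE R {V} A {n} sg.
Arguments game_val R {V} A {n} i c.

(* If a Nash equilibrium has outcome rho and player i deviates at step l to
   c, then i may continue with a best response against the continuation of the
   equilibrium, which costs at most val_{i,c}; the equilibrium property then
   yields the inequality.  Conversely, given rho satisfying the inequalities,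
   let everybody follow rho and, at the first configuration c reached by a
   unilateral deviation of some player i, switch to a profile attaining the
   supremum in val_{i,c}: whatever i does afterwards costs at least val_{i,c}.
   Both the infimum and the supremum in val_{i,c} are attained, since the
   costs involved are naturals or +oo, and bounded by the cost of walking
   along a shortest path to tgt. *)
From HB Require Import structures.
From mathcomp Require Import all_boot all_order all_algebra.
From mathcomp Require Import all_classical all_reals all_analysis.
Set Implicit Arguments. Unset Strict Implicit. Unset Printing Implicit Defensive.
Import Order.TTheory GRing.Theory Num.Theory.
Local Open Scope classical_set_scope.
Local Open Scope ring_scope.

Lemma eq_or_first_difference (T : eqType) (f g : nat -> T) : f 0%N = g 0%N ->
  f = g \/ exists l, (forall m, (m <= l)%N -> f m = g m) /\ f l.+1 != g l.+1.
Proof.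
move=> fg0; case: (pselect (exists k, f k != g k)) => [hex|hno]; last first.
  by left; apply: funext => k; apply/eqP/negPn/negP => fgk; apply: hno; exists k.
right; case: (ex_minnP hex) => [[|l] fgl lmin]; first by rewrite fg0 eqxx in fgl.
exists l; split=> // m ml; apply/eqP/negPn/negP => /lmin.
by rewrite ltnNge ml.
Qed.

Section NatValuedExtrema.
Variable R : realType.

Lemma ereal_inf_nat_mem (S : set (\bar R)) : S !=set0 ->
  (forall x, S x -> (exists m : nat, x = m%:R%:E) \/ x = +oo%E) ->
  S (ereal_inf S).
Proof.
move=> [x0 Sx0] Snat.
case: (pselect (exists m : nat, S m%:R%:E)) => [hex|hno].
  have /ex_minnP[m /asboolP Sm mmin] : exists m, `[< S m%:R%:E >].
    by case: hex => m Sm; exists m; apply/asboolP.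
  suff -> : ereal_inf S = m%:R%:E by [].
  apply/eqP; rewrite eq_le ereal_inf_lbound //=; apply: le_ereal_inf_tmp => y Sy.
  case: (Snat y Sy) => [[k yk]|->]; last exact: leey.
  by rewrite yk lee_fin ler_nat mmin //; apply/asboolP; rewrite -yk.
have Soo y : S y -> y = +oo%E.
  by move=> Sy; case: (Snat y Sy) => [[k yk]|//]; case: hno; exists k; rewrite -yk.
suff -> : ereal_inf S = +oo%E by rewrite -(Soo _ Sx0).
by apply/eqP; rewrite eq_le leey /=; apply: le_ereal_inf_tmp => y /Soo ->.
Qed.

Lemma ereal_sup_nat_mem (S : set (\bar R)) (B : nat) : S !=set0 ->
  (forall x, S x -> exists2 m : nat, x = m%:R%:E & (m <= B)%N) ->
  S (ereal_sup S).
Proof.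
move=> [x0 Sx0] Snat.
have hex : exists m, `[< S m%:R%:E >].
  by case: (Snat _ Sx0) => m x0m _; exists m; apply/asboolP; rewrite -x0m.
have hB m : `[< S m%:R%:E >] -> (m <= B)%N.
  by move=> /asboolP /Snat [k /eqP]; rewrite eqe eqr_nat => /eqP ->.
case: (ex_maxnP hex hB) => m /asboolP Sm mmax.
suff -> : ereal_sup S = m%:R%:E by [].
apply/eqP; rewrite eq_le ereal_sup_ubound // andbT; apply: ge_ereal_sup => y Sy.
case: (Snat y Sy) => k yk _.
by rewrite yk lee_fin ler_nat mmax //; apply/asboolP; rewrite -yk.
Qed.

End NatValuedExtrema.

Section DynamicNCG.
Variables (R : realType) (V : finType) (A : arena V) (n : nat).
Hypothesis hA : arena_wf A.
Local Notation cfg := (config V n).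

Definition stage_cost (rho : nat -> cfg) (i : 'I_n) (k : nat) : nat :=
  step_cost A (rho k) (rho k.+1) i.

Lemma is_path_suffix (rho : nat -> cfg) l :
  is_path A rho -> is_path A (path_suffix rho l).
Proof. by move=> hp k; rewrite /path_suffix addnS. Qed.

Lemma path_stays_tgt (rho : nat -> cfg) i k m :
  is_path A rho -> rho k i = tgt A ->
  rho (k + m)%N i = tgt A.
Proof.
move=> hp hk; elim: m => [|m IH]; first by rewrite addn0.
have := hp (k + m)%N i; rewrite addnS.
case E: (edge A (rho (k + m)%N i) _) => [f|] // _.
by case: hA => _ tgt_loop _ _; apply: (tgt_loop _ f); rewrite -IH.
Qed.

Lemma stage_cost_tgt (rho : nat -> cfg) i k : is_path A rho -> rho k i = tgt A ->
  stage_cost rho i k = 0%N.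
Proof.
move=> hp hk; have := path_stays_tgt 1 hp hk; rewrite addn1 => hk1.
by rewrite /stage_cost /step_cost hk hk1; case: hA => _ _ [f -> ->] _.
Qed.

Lemma path_cost_reached (rho : nat -> cfg) i k : is_path A rho -> rho k i = tgt A ->
  path_cost R A i rho = (\sum_(j < k) stage_cost rho i j)%:R%:E.
Proof.
move=> hp hk; rewrite /path_cost asboolT; last by exists k.
rewrite (@nneseries_split R _ 0 k); last by move=> j _; rewrite lee_fin ler0n.
rewrite add0n [X in (_ + X)%E](@eseries0 R _ k xpredT); last first.
  move=> j kj _; rewrite -(subnKC kj).
  have := stage_cost_tgt hp (path_stays_tgt (j - k) hp hk).
  by rewrite /stage_cost => ->.
by rewrite adde0 big_mkord sumEFin natr_sum.
Qed.

Lemma path_cost_nat_or_oo (rho : nat -> cfg) i : is_path A rho ->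
  (exists m : nat, path_cost R A i rho = m%:R%:E) \/ path_cost R A i rho = +oo%E.
Proof.
move=> hp; case: (pselect (exists k, rho k i = tgt A)) => [[k hk]|hn].
  by left; exists (\sum_(j < k) stage_cost rho i j)%N; exact: path_cost_reached hk.
by right; rewrite /path_cost asboolF.
Qed.

Lemma path_cost_split (rho : nat -> cfg) i l : is_path A rho ->
  path_cost R A i rho =
    ((\sum_(j < l) stage_cost rho i j)%:R%:E + path_cost R A i (path_suffix rho l))%E.
Proof.
move=> hp; have hps := is_path_suffix (l := l) hp.
case: (pselect (exists k, rho k i = tgt A)) => [[k hk]|hn].
  have hlk : rho (l + k)%N i = tgt A by rewrite addnC; exact: path_stays_tgt.
  rewrite (path_cost_reached hp hlk) (@path_cost_reached _ _ k hps) //.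
  rewrite big_split_ord natrD EFinD; congr (_ + _%:R%:E)%E.
  by apply: eq_bigr => j _; rewrite /stage_cost /path_suffix addnS.
have hn' : ~ exists k, path_suffix rho l k i = tgt A.
  by move=> [k hk]; apply: hn; exists (l + k)%N.
by rewrite /path_cost !asboolF.
Qed.

Lemma le_path_cost_deviation (rho rho' : nat -> cfg) i l :
  is_path A rho -> is_path A rho' ->
  (forall m, (m <= l)%N -> rho' m = rho m) ->
  (path_cost R A i rho <= path_cost R A i rho')%E =
  (path_cost R A i (path_suffix rho l) <=
     (step_cost A (rho l) (rho' l.+1) i)%:R%:E
     + path_cost R A i (path_suffix rho' l.+1))%E.
Proof.
move=> hp hp' rho'E.
rewrite (path_cost_split i l hp) (path_cost_split i l.+1 hp') big_ord_recr /=.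
have -> : \sum_(j < l) stage_cost rho' i j = \sum_(j < l) stage_cost rho i j.
  by apply: eq_bigr => j _; rewrite /stage_cost !rho'E // ltnW.
by rewrite natrD EFinD -addeA leeD2lE // /stage_cost rho'E.
Qed.

Lemma outcomeS (sg : profile V n) c0 k :
  outcome sg c0 k.+1 = [ffun j => sg j c0 (hist sg c0 k)].
Proof. by rewrite /outcome /= last_rcons. Qed.

Lemma histS (sg : profile V n) c0 k :
  hist sg c0 k.+1 = rcons (hist sg c0 k) (outcome sg c0 k.+1).
Proof. by rewrite outcomeS. Qed.

Lemma size_hist (sg : profile V n) c0 k : size (hist sg c0 k) = k.
Proof. by elim: k => //= k IH; rewrite size_rcons IH. Qed.

Lemma hist_outcome (sg : profile V n) c0 k :
  hist sg c0 k = [seq outcome sg c0 m.+1 | m <- iota 0 k].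
Proof.
elim: k => // k IH.
by rewrite histS IH -cats1 -addn1 iotaD map_cat add0n addn1.
Qed.

Lemma outcome_is_path (sg : profile V n) c0 :
  valid_profile A sg -> is_path A (outcome sg c0).
Proof.
move=> hv k i; rewrite outcomeS ffunE; have := hv i c0 (hist sg c0 k).
by rewrite /edge_rel /outcome; case: edge.
Qed.

Lemma valid_update (sg : profile V n) i s :
  valid_profile A sg -> valid_strat A i s -> valid_profile A (update sg i s).
Proof. by move=> hv hs j; rewrite /update; case: eqP => [->|]. Qed.

Definition continuation (sg : profile V n) (c0 : cfg) (h0 : seq cfg) : profile V n :=
  fun j c h => sg j c0 (h0 ++ c :: h).

Lemma valid_continuation (sg : profile V n) c0 h0 :
  valid_profile A sg -> valid_profile A (continuation sg c0 h0).
Proof. by move=> hv j c h; have := hv j c0 (h0 ++ c :: h); rewrite last_cat. Qed.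

Lemma outcome_continuation (sg tp : profile V n) c0 l :
  (forall j h, continuation sg c0 (hist sg c0 l) j (outcome sg c0 l.+1) h =
               tp j (outcome sg c0 l.+1) h) ->
  path_suffix (outcome sg c0) l.+1 = outcome tp (outcome sg c0 l.+1).
Proof.
set c := outcome sg c0 l.+1 => sg_tp.
have histE m : hist sg c0 (l.+1 + m) = hist sg c0 l ++ c :: hist tp c m.
  elim: m => [|m IH]; first by rewrite addn0 histS cats1.
  rewrite addnS histS outcomeS IH rcons_cat rcons_cons.
  by congr (_ ++ _ :: rcons _ _); apply/ffunP => j; rewrite !ffunE; exact: sg_tp.
by apply: funext => m; rewrite /path_suffix /outcome histE last_cat.
Qed.

Section Splice.
Variables (sg : profile V n) (i : 'I_n) (l : nat) (c : cfg) (s : strat V n).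

Definition splice_move (c1 : cfg) (h : seq cfg) : V :=
  if (size h < l)%N then sg i c1 h
  else if size h == l then c i
  else s (nth c1 h l) (drop l.+1 h).

Definition splice : strat V n := fun c1 h =>
  if edge_rel A (last c1 h i) (splice_move c1 h) then splice_move c1 h
  else sg i c1 h.

Hypothesis sg_valid : valid_profile A sg.

Lemma splice_valid : valid_strat A i splice.
Proof. by move=> c1 h; rewrite /splice; case: ifP => // _; exact: sg_valid. Qed.

Lemma hist_splice c0 k : (k <= l)%N -> hist (update sg i splice) c0 k = hist sg c0 k.
Proof.
elim: k => [//|k IH] kl; rewrite [LHS]histS [RHS]histS !outcomeS IH; last exact: ltnW.
congr rcons; apply/ffunP => j; rewrite !ffunE /update.
case: eqP => [->|//].
by rewrite /splice /splice_move size_hist kl; case: ifP.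
Qed.

Lemma outcome_splice_prefix c0 k : (k <= l)%N ->
  outcome (update sg i splice) c0 k = outcome sg c0 k.
Proof. by move=> kl; rewrite /outcome hist_splice. Qed.

Lemma outcome_splice_dev c0 : dev A i (outcome sg c0 l) (outcome sg c0 l.+1) c ->
  outcome (update sg i splice) c0 l.+1 = c.
Proof.
move=> [ctrans cothers]; rewrite outcomeS hist_splice //; apply/ffunP => j.
rewrite ffunE /update; case: eqP => [->|/eqP ji]; last first.
  by rewrite cothers // outcomeS ffunE.
rewrite /splice /splice_move size_hist ltnn eqxx -/(outcome sg c0 l) /edge_rel.
by case: edge (ctrans i).
Qed.

Lemma continuation_splice c0 : valid_strat A i s ->
  forall j h, continuation (update sg i splice) c0 (hist sg c0 l) j c h =
              update (continuation sg c0 (hist sg c0 l)) i s j c h.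
Proof.
move=> s_valid j h; rewrite /continuation /update; case: eqP => // _.
set H := hist sg c0 l.
have sizeH : size (H ++ c :: h) = (l + size h).+1.
  by rewrite size_cat size_hist addnS.
have nthH : nth c0 (H ++ c :: h) l = c by rewrite nth_cat size_hist ltnn subnn.
have dropH : drop l.+1 (H ++ c :: h) = h.
  by rewrite -cat_rcons drop_size_cat // size_rcons size_hist.
have moveE : splice_move c0 (H ++ c :: h) = s c h.
  rewrite /splice_move sizeH ltnNge ltnW /= ?ltnS ?leq_addr //.
  by rewrite gtn_eqF ?ltnS ?leq_addr // nthH dropH.
by rewrite /splice moveE last_cat /= s_valid.
Qed.

End Splice.

Definition reaches_tgt_in (v : V) (m : nat) : bool :=
  `[< exists p : seq V, [/\ size p = m, path (edge_rel A) v p & last v p = tgt A] >].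

Lemma tgt_reachable v : exists m, reaches_tgt_in v m.
Proof.
case: hA => _ _ _ /(_ v) /connectP [p hp hl].
by exists (size p); apply/asboolP; exists p.
Qed.

Definition tgt_dist (v : V) : nat := ex_minn (tgt_reachable v).

Lemma tgt_dist_tgt : tgt_dist (tgt A) = 0%N.
Proof.
rewrite /tgt_dist; case: ex_minnP => m _ mmin; apply/eqP; rewrite -leqn0.
by apply: mmin; apply/asboolP; exists [::].
Qed.

Lemma tgt_dist_path v p : path (edge_rel A) v p -> last v p = tgt A ->
  (tgt_dist v <= size p)%N.
Proof.
move=> hp hl; rewrite /tgt_dist; case: ex_minnP => m _ mmin.
by apply: mmin; apply/asboolP; exists p.
Qed.

Lemma tgt_dist_decr v : v != tgt A ->
  exists w, edge_rel A v w && (tgt_dist w < tgt_dist v)%N.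
Proof.
move=> vtgt; rewrite {2}/tgt_dist; case: ex_minnP => m /asboolP [p [<- pth lst]] _.
case: p pth lst => [|w p] /= pth lst; first by rewrite -lst eqxx in vtgt.
by case/andP: pth => vw pth; exists w; rewrite vw ltnS tgt_dist_path.
Qed.

Definition toward_tgt (v : V) : V :=
  if [pick w | edge_rel A v w && (tgt_dist w < tgt_dist v)%N] is Some w then w
  else tgt A.

Lemma toward_tgt_edge v : edge_rel A v (toward_tgt v).
Proof.
rewrite /toward_tgt; case: pickP => [w /andP [] //|hn].
have [->|vtgt] := eqVneq v (tgt A).
  by case: hA => _ _ [f hf _] _; rewrite /edge_rel hf.
by case: (tgt_dist_decr vtgt) => w; rewrite hn.
Qed.

Lemma toward_tgt_dist v : v != tgt A -> (tgt_dist (toward_tgt v) < tgt_dist v)%N.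
Proof.
move=> vtgt; rewrite /toward_tgt; case: pickP => [w /andP [] //|hn].
by case: (tgt_dist_decr vtgt) => w; rewrite hn.
Qed.

Lemma toward_tgt_tgt : toward_tgt (tgt A) = tgt A.
Proof.
by rewrite /toward_tgt; case: pickP => [w /andP []|//]; rewrite tgt_dist_tgt ltn0.
Qed.

Lemma iter_toward_tgt m v : (tgt_dist v <= m)%N -> iter m toward_tgt v = tgt A.
Proof.
elim: m v => [|m IH] v vm.
  have [//|vtgt] := eqVneq v (tgt A).
  by have := toward_tgt_dist vtgt; rewrite leqn0 in vm; rewrite (eqP vm) ltn0.
rewrite iterSr; have [->|vtgt] := eqVneq v (tgt A).
  by rewrite toward_tgt_tgt IH // tgt_dist_tgt.
by rewrite IH // -ltnS (leq_trans (toward_tgt_dist vtgt)).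
Qed.

Definition walk_to_tgt (i : 'I_n) : strat V n :=
  fun c0 h => toward_tgt (last c0 h i).

Lemma walk_to_tgt_valid i : valid_strat A i (walk_to_tgt i).
Proof. by move=> c0 h; exact: toward_tgt_edge. Qed.

Lemma outcome_walk_to_tgt (sg : profile V n) i c0 k :
  outcome (update sg i (walk_to_tgt i)) c0 k i = iter k toward_tgt (c0 i).
Proof.
elim: k => [//|k IH].
by rewrite outcomeS ffunE /update eqxx /walk_to_tgt iterS -IH.
Qed.

(* Loads never exceed n and costs are nondecreasing, so no step costs more. *)
Definition max_edge_cost : nat :=
  (\max_(u : V) \max_(v : V) (if edge A u v is Some f then f n else 0))%N.

Lemma step_cost_le_max (c c' : cfg) i : (step_cost A c c' i <= max_edge_cost)%N.
Proof.
rewrite /step_cost; case E: (edge A (c i) (c' i)) => [f|] //.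
case: hA => cost_ok _ _ _; have [f_mono _] := cost_ok _ _ _ E.
apply: (@leq_trans (f n)).
  by apply: f_mono; rewrite /load; apply: leq_trans (max_card _) _; rewrite card_ord.
by apply: leq_trans (leq_bigmax (c i)); apply: leq_trans (leq_bigmax (c' i)); rewrite E.
Qed.

Lemma walk_to_tgt_cost (sg : profile V n) i c : valid_profile A sg ->
  (profile_cost R A (update sg i (walk_to_tgt i)) c i
     <= (tgt_dist (c i) * max_edge_cost)%N%:R%:E)%E.
Proof.
move=> hv; have hp := outcome_is_path (c0 := c) (valid_update hv (walk_to_tgt_valid i)).
have reach : outcome (update sg i (walk_to_tgt i)) c (tgt_dist (c i)) i = tgt A.
  by rewrite outcome_walk_to_tgt iter_toward_tgt.
rewrite /profile_cost (path_cost_reached hp reach) lee_fin ler_nat.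
rewrite -[X in (_ <= X * _)%N]card_ord -sum_nat_const.
by apply: leq_sum => j _; exact: step_cost_le_max.
Qed.

Definition response_costs (sg : profile V n) i (c : cfg) : set (\bar R) :=
  [set y | exists2 s : strat V n, valid_strat A i s &
                                  y = profile_cost R A (update sg i s) c i].

Lemma response_costs_inf_mem (sg : profile V n) i c : valid_profile A sg ->
  response_costs sg i c (ereal_inf (response_costs sg i c)).
Proof.
move=> hv; apply: ereal_inf_nat_mem.
  by exists (profile_cost R A (update sg i (walk_to_tgt i)) c i);
     exists (walk_to_tgt i) => //; exact: walk_to_tgt_valid.
move=> _ [s hs ->]; apply: path_cost_nat_or_oo; apply: outcome_is_path.
exact: valid_update.
Qed.

Lemma response_costs_inf_bounded (sg : profile V n) i c : valid_profile A sg ->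
  exists2 m : nat, ereal_inf (response_costs sg i c) = m%:R%:E
                 & (m <= tgt_dist (c i) * max_edge_cost)%N.
Proof.
move=> hv; have inf_le : (ereal_inf (response_costs sg i c)
                           <= (tgt_dist (c i) * max_edge_cost)%N%:R%:E)%E.
  apply: le_trans (walk_to_tgt_cost i c hv); apply: ereal_inf_lbound.
  by exists (walk_to_tgt i) => //; exact: walk_to_tgt_valid.
move: inf_le; have [s hs ->] := response_costs_inf_mem i c hv; rewrite /profile_cost.
have s_path := outcome_is_path (c0 := c) (valid_update hv hs).
have [[m ->]|->] := path_cost_nat_or_oo i s_path.
  by rewrite lee_fin ler_nat => ?; exists m.
by rewrite leye_eq.
Qed.

Lemma exists_punishing_profile i (c : cfg) : exists2 P : profile V n,
  valid_profile A P & forall s, valid_strat A i s ->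
    (game_val R A i c <= profile_cost R A (update P i s) c i)%E.
Proof.
have [P hP ->] : [set x | exists2 sg : profile V n, valid_profile A sg &
                    x = ereal_inf (response_costs sg i c)] (game_val R A i c).
  apply: (@ereal_sup_nat_mem _ _ (tgt_dist (c i) * max_edge_cost)).
    by exists (ereal_inf (response_costs (fun j => walk_to_tgt j) i c));
       exists (fun j => walk_to_tgt j) => // j; exact: walk_to_tgt_valid.
  by move=> _ [sg hsg ->]; exact: response_costs_inf_bounded.
by exists P => // s hs; apply: ereal_inf_lbound; exists s.
Qed.

Lemma exists_response_le_val (sg : profile V n) i (c : cfg) : valid_profile A sg ->
  exists2 s, valid_strat A i s &
    (profile_cost R A (update sg i s) c i <= game_val R A i c)%E.
Proof.
move=> hv; have [s hs sE] := response_costs_inf_mem i c hv.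
by exists s; rewrite // -sE; apply: ereal_sup_ubound; exists sg.
Qed.

Lemma NE_outcome_no_profitable_deviation (sg : profile V n) (rho : nat -> cfg) :
  is_NE R A sg -> outcome sg (csrc A n) = rho ->
  forall i l (c : cfg), dev A i (rho l) (rho l.+1) c ->
  (path_cost R A i (path_suffix rho l)
     <= game_val R A i c + (step_cost A (rho l) c i)%:R%:E)%E.
Proof.
move=> [hv hNE] <- i l c hdev; set c0 := csrc A n.
set Q := continuation sg c0 (hist sg c0 l).
have [s hs s_le] : exists2 s, valid_strat A i s &
    (profile_cost R A (update Q i s) c i <= game_val R A i c)%E.
  exact/exists_response_le_val/valid_continuation.
set sg' := update sg i (splice sg i l c s).
have hc : outcome sg' c0 l.+1 = c := outcome_splice_dev s hdev.
have suffixE : path_suffix (outcome sg' c0) l.+1 = outcome (update Q i s) c.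
  rewrite -hc; apply: outcome_continuation => j h.
  by rewrite hist_splice // hc continuation_splice.
have sg_path : is_path A (outcome sg c0) := outcome_is_path hv.
have sg'_path : is_path A (outcome sg' c0).
  exact/outcome_is_path/valid_update/splice_valid.
have prefixE m : (m <= l)%N -> outcome sg' c0 m = outcome sg c0 m.
  exact: outcome_splice_prefix.
have := hNE i _ (splice_valid i l c s hv).
rewrite /profile_cost (le_path_cost_deviation i sg_path sg'_path prefixE).
rewrite -/sg' hc suffixE addeC => /le_trans; apply; exact: leeD2r.
Qed.

Section GrimProfile.
Variable rho : nat -> cfg.

Fixpoint follow_len (h : seq cfg) (k : nat) : nat :=
  if h is x :: h' then (if x == rho k.+1 then (follow_len h' k.+1).+1 else 0%N)
  else 0%N.

Definition rho_hist (a m : nat) : seq cfg := [seq rho k.+1 | k <- iota a m].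

Lemma follow_len_cat a m t :
  follow_len (rho_hist a m ++ t) a = (m + follow_len t (a + m))%N.
Proof.
elim: m a => [|m IH] a; first by rewrite addn0.
by rewrite [rho_hist _ _]/= cat_cons /= eqxx IH addSnnS.
Qed.

Lemma size_rho_hist a m : size (rho_hist a m) = m.
Proof. by rewrite size_map size_iota. Qed.

Lemma rho_histS k : rho_hist 0 k.+1 = rcons (rho_hist 0 k) (rho k.+1).
Proof. by rewrite /rho_hist -addn1 iotaD map_cat cats1 add0n addn1. Qed.

Lemma last_rho_hist k : last (rho 0%N) (rho_hist 0 k) = rho k.
Proof. by elim: k => // k IH; rewrite rho_histS last_rcons. Qed.

Definition deviator (x y : cfg) : option 'I_n :=
  [pick i | [forall j, (j != i) ==> (x j == y j)]].

Lemma deviator_unique i (x y : cfg) : x i != y i ->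
  (forall j, j != i -> x j = y j) -> deviator x y = Some i.
Proof.
move=> xyi xyj; rewrite /deviator; case: pickP => [i' /forallP i'dev|none].
  have [->//|i'i] := eqVneq i' i.
  by move: (i'dev i); rewrite eq_sym i'i /= (negbTE xyi).
suff : [forall j, (j != i) ==> (x j == y j)] by rewrite none.
by apply/forallP => j; apply/implyP => ji; rewrite xyj.
Qed.

Definition punisher i (c : cfg) : profile V n :=
  proj1_sig (cid2 (exists_punishing_profile i c)).

Lemma punisher_valid i c : valid_profile A (punisher i c).
Proof. exact: (proj2_sig (cid2 (exists_punishing_profile i c))).1. Qed.

Lemma punisher_punishes i c s : valid_strat A i s ->
  (game_val R A i c <= profile_cost R A (update (punisher i c) i s) c i)%E.
Proof. exact: (proj2_sig (cid2 (exists_punishing_profile i c))).2. Qed.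

(* Follow rho as long as the history does; from the first configuration x
   reached by a deviation of a single player i, play punisher i x.  Histories
   with simultaneous deviations are irrelevant for equilibria; there, and
   wherever the prescribed move is not an edge, walk to tgt. *)
Definition grim_move (j : 'I_n) (c0 : cfg) (h : seq cfg) : V :=
  let m := follow_len h 0 in
  if m == size h then rho (size h).+1 j else
  let x := nth c0 h m in
  if deviator x (rho m.+1) is Some i then punisher i x j x (drop m.+1 h)
  else walk_to_tgt j c0 h.

Definition grim_profile : profile V n := fun j (c0 : cfg) (h : seq cfg) =>
  if edge_rel A (last c0 h j) (grim_move j c0 h) then grim_move j c0 h
  else walk_to_tgt j c0 h.

Lemma grim_profile_valid : valid_profile A grim_profile.
Proof.
move=> j c0 h; rewrite /grim_profile; case: ifP => // _.
exact: walk_to_tgt_valid.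
Qed.

Lemma grim_profileE j (c0 : cfg) (h : seq cfg) :
  edge_rel A (last c0 h j) (grim_move j c0 h) ->
  grim_profile j c0 h = grim_move j c0 h.
Proof. by rewrite /grim_profile => ->. Qed.

Hypothesis rho_path : is_path A rho.

Lemma grim_profile_follows j k :
  grim_profile j (rho 0%N) (rho_hist 0 k) = rho k.+1 j.
Proof.
have moveE : grim_move j (rho 0%N) (rho_hist 0 k) = rho k.+1 j.
  have := follow_len_cat 0 k [::]; rewrite cats0 addn0 => folE.
  by rewrite /grim_move folE size_rho_hist eqxx.
rewrite grim_profileE moveE // last_rho_hist /edge_rel.
by case: edge (@rho_path k j).
Qed.

Hypothesis rho_src : rho 0%N = csrc A n.

Lemma outcome_grim_profile : outcome grim_profile (csrc A n) = rho.
Proof.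
have histE k : hist grim_profile (csrc A n) k = rho_hist 0 k.
  elim: k => // k IH; rewrite histS outcomeS IH rho_histS; congr rcons.
  by apply/ffunP => j; rewrite ffunE -rho_src grim_profile_follows.
by apply: funext => k; rewrite /outcome histE -rho_src last_rho_hist.
Qed.

Lemma grim_profile_punishes i l (c c0 : cfg) j h : c i != rho l.+1 i ->
  (forall k, k != i -> c k = rho l.+1 k) -> j != i ->
  grim_profile j c0 (rho_hist 0 l ++ c :: h) = punisher i c j c h.
Proof.
move=> ci cj ji; set H := rho_hist 0 l ++ c :: h.
have /negbTE c_rho : c != rho l.+1 by apply: contraNneq ci => ->.
have folE : follow_len H 0 = l by rewrite follow_len_cat add0n /= c_rho addn0.
have sizeH : size H = (l + size h).+1 by rewrite size_cat size_rho_hist addnS.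
have nthH : nth c0 H l = c by rewrite nth_cat size_rho_hist ltnn subnn.
have dropH : drop l.+1 H = h.
  by rewrite /H -cat_rcons drop_size_cat // size_rcons size_rho_hist.
have moveE : grim_move j c0 H = punisher i c j c h.
  rewrite /grim_move folE sizeH ltn_eqF ?ltnS ?leq_addr // nthH.
  by rewrite (deviator_unique ci cj) dropH.
by rewrite grim_profileE moveE // last_cat /=; exact: punisher_valid.
Qed.

Lemma grim_profile_NE :
  (forall i l (c : cfg), dev A i (rho l) (rho l.+1) c ->
     (path_cost R A i (path_suffix rho l)
        <= game_val R A i c + (step_cost A (rho l) c i)%:R%:E)%E) ->
  is_NE R A grim_profile.
Proof.
move=> no_dev; split=> [|i s hs]; first exact: grim_profile_valid.
set c0 := csrc A n; set sg' := update grim_profile i s.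
have hv' : valid_profile A sg' by apply: valid_update grim_profile_valid hs.
have hp' := outcome_is_path (c0 := c0) hv'.
rewrite /profile_cost outcome_grim_profile.
have [->|[l [sg'E ci]]] :=
  @eq_or_first_difference _ (outcome sg' c0) rho (esym rho_src).
  exact: le_refl.
set c := outcome sg' c0 l.+1.
have histE : hist sg' c0 l = rho_hist 0 l.
  by rewrite hist_outcome; apply/eq_in_map => m; rewrite mem_iota => /andP[_ /sg'E].
have cj j : j != i -> c j = rho l.+1 j.
  move=> ji; rewrite /c outcomeS ffunE /sg' /update (negbTE ji).
  by rewrite histE /c0 -rho_src grim_profile_follows.
have {}ci : c i != rho l.+1 i.
  apply: contra ci => /eqP ci; apply/eqP/ffunP => j.
  by have [->//|ji] := eqVneq j i; exact: cj.
have hdev : dev A i (rho l) (rho l.+1) c.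
  by split=> [j|//]; have := hp' l j; rewrite sg'E.
set s2 := continuation sg' c0 (hist sg' c0 l) i.
have suffixE :
    path_suffix (outcome sg' c0) l.+1 = outcome (update (punisher i c) i s2) c.
  apply: outcome_continuation => j h; rewrite /update; case: eqP => [->//|/eqP ji].
  by rewrite /continuation /sg' /update (negbTE ji) histE; apply: grim_profile_punishes.
rewrite (le_path_cost_deviation i rho_path hp' sg'E) -/c suffixE addeC.
rewrite (le_trans (no_dev i l c hdev)) // leeD2r //.
exact/punisher_punishes/valid_continuation.
Qed.

End GrimProfile.

End DynamicNCG.

Theorem mainTheorem5 (R : realType) (V : finType) (A : arena V) (n : nat)
    (hA : arena_wf A) (rho : nat -> config V n)
    (hsrc : rho 0%N = csrc A n) (hpath : is_path A rho) :
  (exists sg : profile V n, is_NE R A sg /\ forall k, outcome sg (csrc A n) k = rho k)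
  <->
  (forall (i : 'I_n) (l : nat) (c : config V n),
     dev A i (rho l) (rho l.+1) c ->
     (path_cost R A i (path_suffix rho l) <= game_val R A i c + ((step_cost A (rho l) c i)%:R)%:E)%E).
Proof.
split=> [[sg [sgNE sgE]]|no_dev].
  exact: (NE_outcome_no_profitable_deviation hA sgNE (funext sgE)).
exists (grim_profile R hA rho); split; first exact: grim_profile_NE.
by move=> k; rewrite outcome_grim_profile.
Qed.
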